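(* Let $X$ be a summable vertex parameter, and let $G=\bigsqcup_{i=1}^N G_i$ be the disjoint union of graphs $G_1,\dots,G_N$. Then $\mathcal{R}^{\mathrm{TE}}_X(G)\cong G_1'\,\square\,\cdots\,\square\, G_N'$ where $G_i'=\mathcal{R}^{\mathrm{TE}}_X(G_i)$, and $\mathcal{R}^{\mathrm{TS}}_X(G)\cong \mathcal{R}^{\mathrm{TS}}_X(G_1)\,\square\,\cdots\,\square\,\mathcal{R}^{\mathrm{TS}}_X(G_N)$, where $\square$ denotes the Cartesian product of graphs.
   Context: All graphs are finite and simple. A graph parameter $X$ is a vertex parameter defined by property $x$ if there is a property $x$ of vertex subsets such that for every graph $G$, $X(G)$ equals either (for every graph) the maximum, or (for every graph) the minimum, of $|B|$ over all $B\subseteq V(G)$ having property $x$ in $G$. $X$ is summable if for every graph $G$: $B\subseteq V(G)$ has property $x$ in $G$ if and only if $B=\bigcup_{C}B_C$ over the connected components $C$ of $G$, where each $B_C\subseteq V(C)$ has property $x$ in $C$. The token exchange $X$-reconfiguration graph $\mathcal{R}^{\mathrm{TE}}_X(G)$ has as vertices all $S\subseteq V(G)$ with $|S|=X(G)$ having property $x$ in $G$, with $S_1S_2$ an edge iff there exist $v_1\in S_1\setminus S_2$, $v_2\in S_2\setminus S_1$ with $S_1\setminus\{v_1\}=S_2\setminus\{v_2\}$. The token sliding graph $\mathcal{R}^{\mathrm{TS}}_X(G)$ has the same vertices, with the additional requirement $v_1v_2\in E(G)$ for adjacency. *)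

From mathcomp Require Import all_boot.
Set Implicit Arguments. Unset Strict Implicit. Unset Printing Implicit Defensive.

Definition simple_graph (T : finType) (e : rel T) : Prop :=
  symmetric e /\ irreflexive e.

Definition vprop := forall T : finType, rel T -> {set T} -> bool.

Definition iso_invariant (x : vprop) : Prop :=
  forall (T1 T2 : finType) (e1 : rel T1) (e2 : rel T2) (f : T1 -> T2),
    simple_graph e1 -> simple_graph e2 ->
    bijective f -> (forall u v, e1 u v = e2 (f u) (f v)) ->
    forall B : {set T1}, x T1 e1 B = x T2 e2 (f @: B).

Definition induced (T : finType) (e : rel T) (C : {set T}) :
  rel {y : T | y \in C} := fun u v => e (val u) (val v).

Definition components (T : finType) (e : rel T) : {set {set T}} :=
  [set [set y | connect e z y] | z : T].

Definition summable (x : vprop) : Prop :=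
  forall (T : finType) (e : rel T), simple_graph e ->
  forall B : {set T},
    x T e B <->
    exists f : forall C : {set T}, {set {y : T | y \in C}},
      (forall C : {set T}, C \in components e -> x _ (@induced T e C) (f C)) /\
      B = \bigcup_(C in components e) [set val y | y in f C].

(* S realizes X(G): it has property x and has maximum (b = true) resp.
   minimum (b = false) size among all sets with property x. *)
Definition optimal (b : bool) (x : vprop) (T : finType) (e : rel T)
  (S : {set T}) : bool :=
  x T e S && [forall B : {set T}, x T e B ==>
                 (if b then #|B| <= #|S| else #|S| <= #|B|)].

Definition RVert (b : bool) (x : vprop) (T : finType) (e : rel T) :=
  {S : {set T} | optimal b x e S}.

Definition TE_adj (b : bool) (x : vprop) (T : finType) (e : rel T) :
  rel (RVert b x e) := fun S1 S2 =>
  [exists v1 : T, exists v2 : T,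
     [&& v1 \in val S1 :\: val S2, v2 \in val S2 :\: val S1 &
         val S1 :\ v1 == val S2 :\ v2]].

Definition TS_adj (b : bool) (x : vprop) (T : finType) (e : rel T) :
  rel (RVert b x e) := fun S1 S2 =>
  [exists v1 : T, exists v2 : T,
     [&& v1 \in val S1 :\: val S2, v2 \in val S2 :\: val S1,
         val S1 :\ v1 == val S2 :\ v2 & e v1 v2]].

Definition dunion_rel (N : nat) (T : 'I_N -> finType) (e : forall i, rel (T i)) :
  rel {i : 'I_N & T i} :=
  fun u v => (tag u == tag v) && e (tag u) (tagged u) (tagged_as u v).

Definition box_adj (N : nat) (V : 'I_N -> Type) (r : forall i, V i -> V i -> Prop) :
  {dffun forall i : 'I_N, V i} -> {dffun forall i : 'I_N, V i} -> Prop :=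
  fun a b' => exists j : 'I_N, r j (a j) (b' j) /\ (forall i, i != j -> a i = b' i).

Definition graph_iso (A B : Type) (ra : A -> A -> Prop) (rb : B -> B -> Prop) : Prop :=
  exists f : A -> B, bijective f /\ (forall u v, ra u v <-> rb (f u) (f v)).

Arguments induced {T} e C.
Arguments optimal b x {T} e S.
Arguments RVert b x {T} e.
Arguments TE_adj b x {T} e S1 S2.
Arguments TS_adj b x {T} e S1 S2.
Arguments dunion_rel {N T} e u v.
Arguments box_adj {N V} r a b'.
Arguments graph_iso {A B} ra rb.

From mathcomp Require Import all_boot.
Set Implicit Arguments. Unset Strict Implicit. Unset Printing Implicit Defensive.

(* By summability and isomorphism invariance, a vertex set of the disjoint union
   has property x iff each of its parts (its traces on the G_i) has it; since
   sizes add up, the optimal sets of the union are exactly the families of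
   optimal sets of the G_i, which gives the bijection S |-> (S ∩ V(G_i))_i.
   All parts of optimal sets have a fixed size, so a token exchange (or slide)
   in the union cannot move a token from one G_i to another: it is an exchange
   inside a single part leaving the other parts unchanged, i.e. an edge of the
   Cartesian product. *)

Lemma connect_homo (T1 T2 : finType) (e1 : rel T1) (e2 : rel T2) (f : T1 -> T2) :
  {homo f : u v / e1 u v >-> e2 u v} ->
  {homo f : u v / connect e1 u v >-> connect e2 u v}.
Proof.
move=> fe u _ /connectP[p e_p ->]; elim: p u e_p => [|v p IHp] u /=; first by rewrite connect0.
by case/andP=> /fe/connect1 euv /IHp; apply: connect_trans.
Qed.

Lemma induced_simple (T : finType) (e : rel T) (C : {set T}) :
  simple_graph e -> simple_graph (induced e C).
Proof. by case=> se ie; split=> [u v|u]; [apply: se | apply: ie]. Qed.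

Lemma iso_invariant_imset (x : vprop) (T1 T2 : finType) (e1 : rel T1) (e2 : rel T2)
    (f : T1 -> T2) :
  iso_invariant x -> simple_graph e1 -> simple_graph e2 ->
  injective f -> {mono f : u v / e1 u v >-> e2 u v} ->
  forall (C : {set T1}) (B : {set T2}),
  x _ (induced e2 (f @: C)) [set w | val w \in B] =
  x _ (induced e1 C) [set y | val y \in f @^-1: B].
Proof.
move=> ix se1 se2 f_inj fe C B.
pose h (y : {y | y \in C}) : {w | w \in f @: C} := exist _ (f (val y)) (imset_f f (valP y)).
have h_bij : bijective h.
  apply: inj_card_bij => [y z /(congr1 val)/f_inj/val_inj //|].
  by rewrite !card_sig card_imset.
rewrite (ix _ _ _ _ h (induced_simple C se1) (induced_simple _ se2) h_bij); last first.
  by move=> u v; rewrite /induced fe.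
congr (x _ _ _); apply/setP=> w; rewrite inE; apply/idP/imsetP=> [wB|[y + ->]].
  have /imsetP[y yC wE] := valP w.
  by exists (exist _ y yC); [rewrite !inE -wE | apply: val_inj].
by rewrite !inE.
Qed.

Lemma components_eq (T : finType) (e : rel T) (C1 C2 : {set T}) (y : T) :
  symmetric e -> C1 \in components e -> C2 \in components e ->
  y \in C1 -> y \in C2 -> C1 = C2.
Proof.
move=> se /imsetP[z1 _ ->] /imsetP[z2 _ ->]; rewrite !inE => z1y z2y.
have ce := sym_connect_sym se.
by apply/setP=> w; rewrite !inE (same_connect ce z1y) (same_connect ce z2y).
Qed.

Lemma summableP (x : vprop) (T : finType) (e : rel T) (B : {set T}) :
  summable x -> simple_graph e ->
  x T e B <-> forall C, C \in components e -> x _ (induced e C) [set y | val y \in B].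
Proof.
move=> sx se; apply: iff_trans (sx T e se B) _; split=> [[f [xf ->]] C Ccomp|xB].
  suff -> : [set y : {y | y \in C} | val y \in \bigcup_(C' in components e) [set val y | y in f C']]
            = f C by exact: xf.
  apply/setP=> y; rewrite inE; apply/bigcupP/idP => [[C' C'comp /imsetP[y' y'f yE]]|yf].
    have C'C : C' = C.
      by apply: (components_eq se.1 C'comp Ccomp (y := val y)); [rewrite yE|]; exact: valP.
    by subst C'; rewrite (val_inj yE).
  by exists C; rewrite ?imset_f.
exists (fun C : {set T} => [set y : {y | y \in C} | val y \in B]); split=> //.
apply/setP=> w; apply/idP/bigcupP => [wB|[C _ /imsetP[y + ->]]]; last by rewrite inE.
have wC : w \in [set y | connect e w y] by rewrite inE connect0.
exists [set y | connect e w y]; first exact: imset_f.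
by apply/imsetP; exists (exist _ w wC); rewrite ?inE.
Qed.

Definition exchange (U : finType) (P : rel U) (A1 A2 : {set U}) : bool :=
  [exists v1, exists v2,
     [&& v1 \in A1 :\: A2, v2 \in A2 :\: A1, A1 :\ v1 == A2 :\ v2 & P v1 v2]].

Lemma TE_adjE (b : bool) (x : vprop) (T : finType) (e : rel T) (S1 S2 : RVert b x e) :
  TE_adj b x e S1 S2 = exchange [rel _ _ | true] (val S1) (val S2).
Proof. by apply: eq_existsb => v1; apply: eq_existsb => v2; rewrite andbT. Qed.

Lemma eq_box_adj (N : nat) (V : 'I_N -> Type) (r r' : forall i, V i -> V i -> Prop) :
  (forall i u v, r i u v <-> r' i u v) -> forall a c, box_adj r a c <-> box_adj r' a c.
Proof. by move=> rr' a c; split=> -[j [/rr' ? ?]]; exists j. Qed.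

Lemma optimal_card (b : bool) (x : vprop) (T : finType) (e : rel T) (S1 S2 : {set T}) :
  optimal b x e S1 -> optimal b x e S2 -> #|S1| = #|S2|.
Proof.
case/andP=> xS1 /forallP/(_ S2) opt1 /andP[xS2 /forallP/(_ S1) opt2].
by apply/eqP; rewrite eqn_leq; case: b opt1 opt2 => /implyP-> // /implyP->.
Qed.

Section DisjointUnion.

Variables (N : nat) (T : 'I_N -> finType).
Local Notation S := {i : 'I_N & T i}.
Implicit Types (B : {set S}) (F : forall i, {set T i}).

Definition dinj (i : 'I_N) (t : T i) : S := Tagged (fun i => T i) t.
Definition proj (i : 'I_N) (B : {set S}) : {set T i} := @dinj i @^-1: B.
Definition glue (F : forall i, {set T i}) : {set S} := [set w | tagged w \in F (tag w)].

Lemma dinj_inj i : injective (@dinj i).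
Proof. by move=> a c /(congr1 (tagged_as (dinj a))); rewrite !tagged_asE. Qed.

Lemma proj_glue F i : proj i (glue F) = F i.
Proof. by apply/setP=> t; rewrite !inE. Qed.

Lemma glue_proj B : glue (fun i => proj i B) = B.
Proof. by apply/setP=> -[i t]; rewrite !inE. Qed.

Lemma eq_proj B1 B2 : (forall i, proj i B1 = proj i B2) -> B1 = B2.
Proof. by move=> eqB; apply/setP=> -[i t]; move/setP: (eqB i) => /(_ t); rewrite !inE. Qed.

Lemma card_glue F : #|glue F| = \sum_i #|F i|.
Proof.
under eq_bigr do rewrite -sum1_card.
by rewrite sig_big_dep /= -sum1_card; apply: eq_bigl => w; rewrite inE.
Qed.

Lemma card_proj B : #|B| = \sum_i #|proj i B|.
Proof. by rewrite -{1}(glue_proj B) card_glue. Qed.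

Lemma projD1 B i (a : T i) : proj i (B :\ dinj a) = proj i B :\ a.
Proof. by apply/setP=> t; rewrite !inE (inj_eq (@dinj_inj i)). Qed.

Lemma projD1_neq B i j (a : T i) : j != i -> proj j (B :\ dinj a) = proj j B.
Proof.
move=> nji; apply/setP=> t; rewrite !inE.
by case: eqP => [/(congr1 tag) /= eji|//]; rewrite eji eqxx in nji.
Qed.

Lemma setD1_dinj_eq (S1 S2 : {set S}) j (a1 a2 : T j) :
  S1 :\ dinj a1 = S2 :\ dinj a2 <->
  proj j S1 :\ a1 = proj j S2 :\ a2 /\ (forall k, k != j -> proj k S1 = proj k S2).
Proof.
split=> [eqS|[eqj eqk]].
  split=> [|k nkj]; first by rewrite -!projD1 eqS.
  by rewrite -(projD1_neq S1 a1 nkj) -(projD1_neq S2 a2 nkj) eqS.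
apply: eq_proj => k; have [->|nkj] := eqVneq k j; first by rewrite !projD1 eqj.
by rewrite !projD1_neq // eqk.
Qed.

Lemma exchange_tag (S1 S2 : {set S}) v1 v2 :
  (forall i, #|proj i S1| = #|proj i S2|) ->
  v1 \in S1 -> S1 :\ v1 = S2 :\ v2 -> tag v1 = tag v2.
Proof.
case: v1 v2 => i a1 [j a2] cardS S1a1 eqS /=; apply/eqP; apply: contraT => nij.
have := congr1 (proj i) eqS; rewrite projD1 projD1_neq // => eqi.
have := cardsD1 a1 (proj i S1); rewrite inE S1a1 eqi cardS.
by rewrite add1n => /n_Sn.
Qed.

Lemma exchange_dunion (P : rel S) (Q : forall i, rel (T i)) (S1 S2 : {set S}) :
  (forall i (a1 a2 : T i), P (dinj a1) (dinj a2) = Q i a1 a2) ->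
  (forall i, #|proj i S1| = #|proj i S2|) ->
  exchange P S1 S2 <->
  exists j, exchange (Q j) (proj j S1) (proj j S2) /\
            (forall k, k != j -> proj k S1 = proj k S2).
Proof.
move=> PQ cardS; split.
  case/existsP=> -[i a1] /existsP[[j a2] /and4P[S1a1 S2a2 /eqP eqS Pa]].
  have /= eij := exchange_tag cardS (setDP S1a1).1 eqS; subst j.
  have [eqi eqk] := (setD1_dinj_eq S1 S2 a1 a2).1 eqS.
  exists i; split=> //; apply/existsP; exists a1; apply/existsP; exists a2.
  by rewrite !inE -PQ eqi eqxx Pa; rewrite !inE in S1a1 S2a2; rewrite S1a1 S2a2.
case=> j [/existsP[a1 /existsP[a2 /and4P[S1a1 S2a2 /eqP eqj Qa]]] eqk].
apply/existsP; exists (dinj a1); apply/existsP; exists (dinj a2).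
rewrite PQ Qa andbT; rewrite !inE in S1a1 S2a2; rewrite !inE S1a1 S2a2 /=.
by apply/eqP/setD1_dinj_eq.
Qed.

End DisjointUnion.
Arguments dinj {N T i} t.
Arguments proj {N T} i B.
Arguments glue {N T} F.

Section DisjointUnionGraph.

Variables (N : nat) (T : 'I_N -> finType) (e : forall i, rel (T i)).
Arguments e : clear implicits.
Hypothesis se : forall i, simple_graph (e i).
Local Notation S := {i : 'I_N & T i}.
Local Notation E := (dunion_rel e).

Lemma dunion_rel_dinj i (a c : T i) : E (dinj a) (dinj c) = e i a c.
Proof. by rewrite /dunion_rel /= eqxx tagged_asE. Qed.

Lemma dunion_rel_tag u v : E u v -> tag u = tag v.
Proof. by case/andP=> /eqP. Qed.

Lemma dunion_simple : simple_graph E.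
Proof.
split=> [[i a] [j c]|[i a]]; last by rewrite -/(dinj a) dunion_rel_dinj (se i).2.
have [eij|nij] := eqVneq i j; last by rewrite /dunion_rel /= (negbTE nij) eq_sym (negbTE nij).
by subst j; rewrite -/(dinj a) -/(dinj c) !dunion_rel_dinj (se i).1.
Qed.

Lemma dunion_component i (a : T i) :
  [set w | connect E (dinj a) w] = dinj @: [set y | connect (e i) a y].
Proof.
apply/setP=> w; rewrite inE; apply/idP/imsetP=> [|[c + ->]]; last first.
  by rewrite inE; apply: connect_homo => u v; rewrite dunion_rel_dinj.
have closedC : closed E (mem (dinj @: [set y | connect (e i) a y])).
  apply: intro_closed; first exact: sym_connect_sym dunion_simple.1.
  move=> _ [j d] /[swap] /imsetP[c /[!inE] ac ->] Ecd.
  have /= eij := dunion_rel_tag Ecd; subst j.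
  rewrite -/(dinj d) dunion_rel_dinj in Ecd *.
  by rewrite imset_f // inE (connect_trans ac (connect1 Ecd)).
move/(closed_connect closedC); rewrite imset_f ?inE ?connect0 // => /esym/imsetP[c].
by exists c.
Qed.

Lemma components_dunionP (C : {set S}) :
  reflect (exists i, exists2 C', C' \in components (e i) & C = dinj @: C')
          (C \in components E).
Proof.
apply: (iffP imsetP) => [[[i a] _ ->]|[i [_ /imsetP[a _ ->] ->]]].
  by exists i; [exists [set y | connect (e i) a y]; [exact: imset_f | exact: dunion_component]].
by exists (dinj a); rewrite ?dunion_component.
Qed.

Variable x : vprop.
Arguments x : clear implicits.
Hypotheses (ix : iso_invariant x) (sx : summable x).

Lemma summable_dunion (B : {set S}) : x _ E B <-> forall i, x _ (e i) (proj i B).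
Proof.
have x_dinj i (C : {set T i}) :
    x _ (induced E (dinj @: C)) [set w | val w \in B] =
    x _ (induced (e i) C) [set y | val y \in proj i B].
  apply: iso_invariant_imset => //; [exact: dunion_simple | exact: dinj_inj |].
  by move=> a c; rewrite dunion_rel_dinj.
apply: iff_trans (summableP B sx dunion_simple) _; split=> [xB i|xB C].
  apply/summableP => // C' C'comp; rewrite -x_dinj; apply: xB.
  by apply/components_dunionP; exists i; [exists C'].
case/components_dunionP=> i [C' C'comp ->]; rewrite x_dinj.
exact: (summableP _ sx (se i)).1.
Qed.

End DisjointUnionGraph.

Section Optimal.

Variables (N : nat) (T : 'I_N -> finType) (e : forall i, rel (T i)).
Variables (x : vprop) (b : bool) (E : rel {i : 'I_N & T i}).
Arguments e : clear implicits.
Arguments x : clear implicits.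
Hypothesis xE : forall B, x _ E B <-> forall i, x _ (e i) (proj i B).

Lemma optimal_proj B : optimal b x E B -> forall i, optimal b x (e i) (proj i B).
Proof.
case/andP=> xB /forallP optB i; apply/andP; split; first exact: (xE B).1.
apply/forallP=> B'; apply/implyP=> xB'.
pose B'' := (dinj @: B') :|: [set w in B | tag w != i].
have B''_i : proj i B'' = B'.
  by apply/setP=> t; rewrite !inE (mem_imset _ _ (@dinj_inj _ _ i)) eqxx andbF orbF.
have B''_neq j : j != i -> proj j B'' = proj j B.
  move=> nji; apply/setP=> t; rewrite !inE nji andbT.
  by case: imsetP => // -[a _ /(congr1 tag) /= eji]; rewrite eji eqxx in nji.
have xB'' : x _ E B''.
  apply/xE => j; have [->|nji] := eqVneq j i; first by rewrite B''_i.
  by rewrite B''_neq //; apply: (xE B).1.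
have sum_proj (C : {set {j : 'I_N & T j}}) :
    \sum_j #|proj j C| = #|proj i C| + \sum_(j | j != i) #|proj j C|.
  by rewrite (bigD1 i).
have sum_neq : \sum_(j | j != i) #|proj j B''| = \sum_(j | j != i) #|proj j B|.
  by apply: eq_bigr => j /B''_neq ->.
have := implyP (optB B'') xB''.
rewrite (card_proj B'') (card_proj B) !sum_proj B''_i sum_neq.
by case: b; rewrite leq_add2r.
Qed.

Lemma optimal_glue F : (forall i, optimal b x (e i) (F i)) -> optimal b x E (glue F).
Proof.
move=> optF; apply/andP; split.
  by apply/xE => i; rewrite proj_glue; case/andP: (optF i).
apply/forallP=> B; apply/implyP=> /xE xB; rewrite card_glue (card_proj B).
case: b optF => optF; apply: leq_sum => i _;
  by case/andP: (optF i) => _ /forallP/(_ (proj i B))/implyP; apply.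
Qed.

End Optimal.

Section Reconfiguration.

Variables (N : nat) (T : 'I_N -> finType) (e : forall i, rel (T i)).
Variables (x : vprop) (b : bool).
Arguments e : clear implicits.
Arguments x : clear implicits.
Local Notation E := (dunion_rel e).
Hypothesis xE : forall B, x _ E B <-> forall i, x _ (e i) (proj i B).

Definition rvert_proj (S0 : RVert b x E) : {dffun forall i, RVert b x (e i)} :=
  finfun (fun i => exist _ (proj i (val S0)) (optimal_proj xE (valP S0) i)).

Definition rvert_glue (F : {dffun forall i, RVert b x (e i)}) : RVert b x E :=
  exist _ (glue (fun i => val (F i))) (optimal_glue xE (fun i => valP (F i))).

Lemma rvert_projE S0 i : val (rvert_proj S0 i) = proj i (val S0).
Proof. by rewrite ffunE. Qed.

Lemma rvert_proj_bij : bijective rvert_proj.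
Proof.
exists rvert_glue => [S0|F]; first by apply/val_inj/eq_proj => i; rewrite proj_glue rvert_projE.
by apply/ffunP=> i; apply: val_inj; rewrite rvert_projE proj_glue.
Qed.

Lemma card_proj_rvert (S1 S2 : RVert b x E) i : #|proj i (val S1)| = #|proj i (val S2)|.
Proof. exact: optimal_card (optimal_proj xE (valP S1) i) (optimal_proj xE (valP S2) i). Qed.

Lemma exchange_rvert_proj (P : rel {i : 'I_N & T i}) (Q : forall i, rel (T i)) :
  (forall i (a1 a2 : T i), P (dinj a1) (dinj a2) = Q i a1 a2) ->
  forall S1 S2 : RVert b x E,
  exchange P (val S1) (val S2) <->
  box_adj (fun i (u v : RVert b x (e i)) => exchange (Q i) (val u) (val v))
          (rvert_proj S1) (rvert_proj S2).
Proof.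
move=> PQ S1 S2; apply: iff_trans (exchange_dunion PQ (card_proj_rvert S1 S2)) _.
have eq_rvert k : rvert_proj S1 k = rvert_proj S2 k <-> proj k (val S1) = proj k (val S2).
  by rewrite -!rvert_projE; split=> [->|/val_inj].
by split=> -[j [exj eqk]]; exists j; rewrite ?rvert_projE in exj *; split=> // k /eqk/eq_rvert.
Qed.

Lemma TE_adj_dunion S1 S2 :
  TE_adj b x E S1 S2 <->
  box_adj (fun i u v => TE_adj b x (e i) u v) (rvert_proj S1) (rvert_proj S2).
Proof.
rewrite TE_adjE.
have PQ i (a1 a2 : T i) : [rel _ _ | true] (dinj a1) (dinj a2) = [rel _ _ | true] a1 a2 by [].
apply: iff_trans (exchange_rvert_proj PQ S1 S2) _.
by apply: eq_box_adj => i u v; rewrite TE_adjE.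
Qed.

Lemma TS_adj_dunion S1 S2 :
  TS_adj b x E S1 S2 <->
  box_adj (fun i u v => TS_adj b x (e i) u v) (rvert_proj S1) (rvert_proj S2).
Proof. exact: (exchange_rvert_proj (@dunion_rel_dinj _ _ e) S1 S2). Qed.

End Reconfiguration.

Theorem theorem3p3 (x : vprop) (b : bool) (N : nat) (T : 'I_N -> finType)
  (e : forall i : 'I_N, rel (T i)) :
  iso_invariant x -> summable x -> (forall i, simple_graph (e i)) ->
  graph_iso (TE_adj b x (dunion_rel e))
            (box_adj (fun i => fun u v => TE_adj b x (e i) u v)) /\
  graph_iso (TS_adj b x (dunion_rel e))
            (box_adj (fun i => fun u v => TS_adj b x (e i) u v)).
Proof.
move=> ix sx se; have xE := summable_dunion se ix sx.
split; exists (rvert_proj (b := b) xE); split.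
- exact: rvert_proj_bij.
- exact: TE_adj_dunion.
- exact: rvert_proj_bij.
- exact: TS_adj_dunion.
Qed.
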